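(* Let $v$ be a non-leaf node of a draft tree with $m$ children $\mathcal{C}(v)=\{u_1,\dots,u_m\}$ generated by Greedy sampling, and let $\tilde p_v\in[0,1]$. Call an allocation at $v$ any rule assigning to each possible value $s$ of the sampled child $u_m$ numbers $q(t\mid s)\ge 0$, $t\in\Sigma$, with $\sum_{t\in\Sigma}q(t\mid s)\le 1$, that is locally lossless, i.e. $\sum_{s\in\Sigma}\mathcal{M}_s^\neg(s\mid v)\,q(t\mid s)=\tilde p_v\mathcal{M}_b(t\mid v)$ for all $t\in\Sigma$. Its conditional acceptance rate is $\mathbb{E}_{u_m\sim\mathcal{M}_s^\neg(\cdot\mid v)}\big[\sum_{j=1}^m q(u_j\mid u_m)\big]$. Then the UniVer allocation (the numbers $p_v(\cdot)$ defined in the context, viewed as functions of $u_m$) achieves the maximum conditional acceptance rate among all locally lossless allocations at $v$, and this maximum equals $$\alpha^*_{\rm UniVer}=\sum_{u\in H_v}\tilde p_v\mathcal{M}_b(u\mid v)+\sum_{u\in\Sigma}\min\{\tilde p_v\mathcal{M}_b(u\mid v),\,\mathcal{M}_s^\neg(u\mid v)\}.$$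
   Context: Let $\Sigma$ be a finite vocabulary, and let $\mathcal{M}_b(\cdot\mid v)$ (target) and $\mathcal{M}_s(\cdot\mid v)$ (draft) be probability distributions on $\Sigma$ conditioned on the context $v$. Greedy sampling of the $m$ children of $v$: $u_1,\dots,u_{m-1}$ are the $m-1$ most probable tokens under $\mathcal{M}_s(\cdot\mid v)$ (set $H_v=\{u_1,\dots,u_{m-1}\}$, i.e. $H_v$ is the set of the top-$(m-1)$ tokens of $\mathcal{M}_s(\cdot\mid v)$, ties broken by a fixed rule), and $u_m$ is drawn from the residual distribution $\mathcal{M}_s^\neg(\cdot\mid v)$, where $\mathcal{M}_s^\neg(x\mid v)=\mathcal{M}_s(x\mid v)/\sum_{y\notin H_v}\mathcal{M}_s(y\mid v)$ for $x\notin H_v$ and $0$ for $x\in H_v$. $[x]_+=\max\{x,0\}$. UniVer allocation at $v$ with prefix acceptance probability $\tilde p_v$: $Z_v=1-\tilde p_v+\sum_{x\in\Sigma}[\tilde p_v\mathcal{M}_b(x\mid v)-\mathcal{M}_s^\neg(x\mid v)]_+$; $p_v(u_m)=\min\{1,\tilde p_v\mathcal{M}_b(u_m\mid v)/\mathcal{M}_s^\neg(u_m\mid v)\}$; for every $u\in\Sigma\setminus\{u_m\}$, $p_v(u)=[\tilde p_v\mathcal{M}_b(u\mid v)-\mathcal{M}_s^\neg(u\mid v)]_+\,(1-p_v(u_m))/Z_v$. *)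

From HB Require Import structures.
From mathcomp Require Import all_boot all_order all_algebra.
Set Implicit Arguments. Unset Strict Implicit. Unset Printing Implicit Defensive.
Import Order.TTheory GRing.Theory Num.Theory.
Local Open Scope ring_scope.

Definition is_distr (R : realFieldType) (Sigma : finType) (P : Sigma -> R) :=
  (forall x, 0 <= P x) /\ \sum_(x : Sigma) P x = 1.

Definition posp (R : realFieldType) (x : R) : R := Num.max x 0.

Definition is_top_set (R : realFieldType) (Sigma : finType) (Ms : Sigma -> R)
  (k : nat) (H : {set Sigma}) :=
  #|H| = k /\ (forall x y, x \in H -> y \notin H -> Ms y <= Ms x).

Definition Mneg (R : realFieldType) (Sigma : finType) (Ms : Sigma -> R)
  (H : {set Sigma}) (x : Sigma) : R :=
  if x \in H then 0 else Ms x / \sum_(y | y \notin H) Ms y.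

Definition Zv (R : realFieldType) (Sigma : finType) (pt : R) (Mb Ms : Sigma -> R)
  (H : {set Sigma}) : R :=
  1 - pt + \sum_(x : Sigma) posp (pt * Mb x - Mneg Ms H x).

(* UniVer allocation: univer ... s t = p_v(t) when the sampled child u_m = s. *)
Definition univer (R : realFieldType) (Sigma : finType) (pt : R) (Mb Ms : Sigma -> R)
  (H : {set Sigma}) (s t : Sigma) : R :=
  let pm := Num.min 1 (pt * Mb s / Mneg Ms H s) in
  if t == s then pm
  else posp (pt * Mb t - Mneg Ms H t) * (1 - pm) / Zv pt Mb Ms H.

(* an allocation: q s t = q(t | s), s = value of u_m *)
Definition is_allocation (R : realFieldType) (Sigma : finType) (q : Sigma -> Sigma -> R) :=
  forall s, (forall t, 0 <= q s t) /\ \sum_(t : Sigma) q s t <= 1.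

Definition locally_lossless (R : realFieldType) (Sigma : finType) (pt : R)
  (Mb Ms : Sigma -> R) (H : {set Sigma}) (q : Sigma -> Sigma -> R) :=
  forall t, \sum_(s : Sigma) Mneg Ms H s * q s t = pt * Mb t.

(* conditional acceptance rate: children are u_1..u_{m-1} = elements of H, u_m = s *)
Definition acc_rate (R : realFieldType) (Sigma : finType) (Ms : Sigma -> R)
  (H : {set Sigma}) (q : Sigma -> Sigma -> R) : R :=
  \sum_(s : Sigma) Mneg Ms H s * (\sum_(t in H) q s t + q s s).

From HB Require Import structures.
From mathcomp Require Import all_boot all_order all_algebra.
From mathcomp Require Import ring lra.
Set Implicit Arguments. Unset Strict Implicit. Unset Printing Implicit Defensive.
Import Order.TTheory GRing.Theory Num.Theory.
Local Open Scope ring_scope.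

(* Write a = p~_v M_b(.|v) for the target mass and b = M_s^neg(.|v) for the
   law of u_m.  Losslessness pins down the expected mass sent to the children
   in H_v to sum_{u in H_v} a u, so only the diagonal term E[q(u_m | u_m)] can
   be optimised; each of its summands b s q(s | s) is at most b s (as q is
   sub-stochastic) and at most a s (by losslessness at t = s).  UniVer attains
   min(a s, b s) on the diagonal and redistributes the leftover mass
   [b s - a s]_+ proportionally to the deficits [a t - b t]_+, whose total is
   exactly the normaliser Z_v = 1 - sum_u min(a u, b u). *)

Section PositivePart.
Variable R : realFieldType.
Implicit Types x y : R.

Lemma posp_ge0 x : 0 <= posp x.
Proof. by rewrite /posp le_max lexx orbT. Qed.

Lemma posp_nonpos x : x <= 0 -> posp x = 0.
Proof. by move=> x_le0; rewrite /posp max_r. Qed.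

Lemma posp_id x : 0 <= x -> posp x = x.
Proof. by move=> x_ge0; rewrite /posp max_l. Qed.

Lemma min_add_posp_sub x y : Num.min x y + posp (x - y) = x.
Proof.
rewrite /posp minEle maxEle.
by case: (lerP x y) => ?; case: (lerP (x - y) 0) => ?; lra.
Qed.

Lemma mulr_min1_div x y : 0 <= x -> 0 <= y -> x * Num.min 1 (y / x) = Num.min y x.
Proof.
move=> x_ge0 y_ge0; have [->|x_neq0] := eqVneq x 0.
  by rewrite mul0r min_r.
have x_gt0 : 0 < x by rewrite lt_def x_neq0.
have [y_le_x|x_lt_y] := lerP y x.
  by rewrite min_r ?ler_pdivrMr ?mul1r // mulrC divfK ?min_l.
by rewrite min_l ?mulr1 ?min_r ?ler_pdivlMr ?mul1r // ltW.
Qed.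

End PositivePart.

Section ResidualAllocation.
Variables (R : realFieldType) (Sigma : finType) (c : R) (a b : Sigma -> R).
Hypotheses (a_ge0 : forall x, 0 <= a x) (b_ge0 : forall x, 0 <= b x).
Hypotheses (sum_a : \sum_x a x = c) (c_le1 : c <= 1) (sum_b : \sum_x b x = 1).

Definition residual_norm : R := 1 - c + \sum_x posp (a x - b x).

Definition diag_accept (s : Sigma) : R := Num.min 1 (a s / b s).

Definition residual_alloc (s t : Sigma) : R :=
  if t == s then diag_accept s
  else posp (a t - b t) * (1 - diag_accept s) / residual_norm.

Let overlap := \sum_x Num.min (a x) (b x).

Lemma sum_posp_excess : \sum_x posp (a x - b x) = c - overlap.
Proof.
rewrite -sum_a /overlap -sumrB; apply: eq_bigr => x _.
by have := min_add_posp_sub (a x) (b x); lra.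
Qed.

Lemma sum_posp_deficit : \sum_x posp (b x - a x) = residual_norm.
Proof.
rewrite /residual_norm sum_posp_excess.
have -> : 1 - c + (c - overlap) = \sum_x b x - overlap by rewrite sum_b; ring.
rewrite /overlap -sumrB; apply: eq_bigr => x _.
by have := min_add_posp_sub (b x) (a x); rewrite minC; lra.
Qed.

Lemma partial_excess_le_norm (P : pred Sigma) :
  \sum_(x | P x) posp (a x - b x) <= residual_norm.
Proof.
rewrite /residual_norm [X in _ <= _ + X](bigID P) /= addrCA lerDl addr_ge0 ?subr_ge0 //.
by apply: sumr_ge0 => x _; exact: posp_ge0.
Qed.

Lemma posp_excess_le_norm t : posp (a t - b t) <= residual_norm.
Proof. by have := partial_excess_le_norm (pred1 t); rewrite big_pred1_eq. Qed.

Lemma residual_norm_ge0 : 0 <= residual_norm.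
Proof. by have := partial_excess_le_norm pred0; rewrite big_pred0. Qed.

Lemma diag_accept_ge0 s : 0 <= diag_accept s.
Proof. by rewrite le_min ler01 divr_ge0. Qed.

Lemma diag_accept_le1 s : diag_accept s <= 1.
Proof. by rewrite ge_min lexx. Qed.

Lemma mul_diag_accept s : b s * diag_accept s = Num.min (a s) (b s).
Proof. exact: mulr_min1_div. Qed.

Lemma mul_diag_reject s : b s * (1 - diag_accept s) = posp (b s - a s).
Proof.
rewrite mulrBr mulr1 mul_diag_accept minC.
by have := min_add_posp_sub (b s) (a s); lra.
Qed.

Lemma residual_alloc_diag s : residual_alloc s s = diag_accept s.
Proof. by rewrite /residual_alloc eqxx. Qed.

Lemma residual_alloc_offdiag s t : t != s ->
  residual_alloc s t = posp (a t - b t) * (1 - diag_accept s) / residual_norm.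
Proof. by rewrite /residual_alloc => /negbTE ->. Qed.

Lemma residual_alloc_is_allocation : is_allocation residual_alloc.
Proof.
have rej_ge0 s : 0 <= 1 - diag_accept s by rewrite subr_ge0 diag_accept_le1.
move=> s; split=> [t|].
  have [->|ts] := eqVneq t s; first by rewrite residual_alloc_diag diag_accept_ge0.
  by rewrite residual_alloc_offdiag // !mulr_ge0 ?posp_ge0 ?invr_ge0 ?residual_norm_ge0.
rewrite (bigD1 s) //= residual_alloc_diag -lerBrDl.
under eq_bigr => t ts do rewrite residual_alloc_offdiag // mulrAC.
rewrite -mulr_suml -mulr_suml ler_piMl //.
have [->|Z_neq0] := eqVneq residual_norm 0; first by rewrite invr0 mulr0 ler01.
have Z_gt0 : 0 < residual_norm by rewrite lt_def Z_neq0 residual_norm_ge0.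
by rewrite ler_pdivrMr // mul1r partial_excess_le_norm.
Qed.

Lemma residual_alloc_lossless t : \sum_s b s * residual_alloc s t = a t.
Proof.
rewrite (bigD1 t) //= residual_alloc_diag mul_diag_accept.
have -> : \sum_(s | s != t) b s * residual_alloc s t
    = posp (a t - b t) / residual_norm * \sum_(s | s != t) posp (b s - a s).
  rewrite mulr_sumr; apply: eq_bigr => s st.
  by rewrite residual_alloc_offdiag 1?eq_sym // -mul_diag_reject; ring.
have -> : \sum_(s | s != t) posp (b s - a s) = residual_norm - posp (b t - a t).
  by rewrite -sum_posp_deficit [in RHS](bigD1 t) //= addrAC subrr add0r.
have [ab|ba] := lerP (a t) (b t).
  by rewrite posp_nonpos ?subr_le0 // !mul0r addr0.
have excess : posp (a t - b t) = a t - b t by rewrite posp_id // subr_ge0 ltW.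
have Z_neq0 : residual_norm != 0.
  by rewrite gt_eqF // (lt_le_trans _ (posp_excess_le_norm t)) // excess subr_gt0.
by rewrite (posp_nonpos (x := b t - a t)) ?subr_le0 ?ltW // subr0 divfK // excess; ring.
Qed.

Lemma sum_diag_residual_alloc :
  \sum_s b s * residual_alloc s s = \sum_s Num.min (a s) (b s).
Proof. by apply: eq_bigr => s _; rewrite residual_alloc_diag mul_diag_accept. Qed.

Section LosslessAllocation.
Variable q : Sigma -> Sigma -> R.
Hypotheses (q_alloc : is_allocation q) (q_lossless : forall t, \sum_s b s * q s t = a t).

Lemma lossless_diag_le_min s : b s * q s s <= Num.min (a s) (b s).
Proof.
have [q_ge0 q_sum_le1] := q_alloc s.
have diag_le_sum (F : Sigma -> R) : (forall x, 0 <= F x) -> F s <= \sum_x F x.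
  by move=> F_ge0; rewrite (bigD1 s) //= lerDl sumr_ge0.
rewrite le_min; apply/andP; split.
  rewrite -(q_lossless s) (diag_le_sum (fun x => b x * q x s)) // => x.
  by rewrite mulr_ge0 //; case: (q_alloc x).
by rewrite ler_piMr // (le_trans (diag_le_sum _ q_ge0)).
Qed.

Lemma sum_lossless_diag_le : \sum_s b s * q s s <= \sum_s Num.min (a s) (b s).
Proof. by apply: ler_sum => s _; exact: lossless_diag_le_min. Qed.

Lemma sum_lossless_accept (H : {set Sigma}) :
  \sum_s b s * (\sum_(t in H) q s t + q s s)
    = \sum_(t in H) a t + \sum_s b s * q s s.
Proof.
under eq_bigr do rewrite mulrDr mulr_sumr.
by rewrite big_split /= exchange_big /=; under eq_bigr do rewrite q_lossless.
Qed.

End LosslessAllocation.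

End ResidualAllocation.

Section ResidualDraft.
Variables (R : realFieldType) (Sigma : finType) (Ms : Sigma -> R) (H : {set Sigma}).
Hypothesis Ms_ge0 : forall x, 0 <= Ms x.
Hypothesis residual_mass_gt0 : 0 < \sum_(y | y \notin H) Ms y.

Lemma Mneg_ge0 x : 0 <= Mneg Ms H x.
Proof. by rewrite /Mneg; case: ifP => // _; rewrite divr_ge0 // ltW. Qed.

Lemma sum_Mneg : \sum_x Mneg Ms H x = 1.
Proof.
rewrite (bigID (mem H)) /= big1 => [|x xH]; last by rewrite /Mneg xH.
under eq_bigr => x /negbTE xNH do rewrite /Mneg xNH.
by rewrite add0r -mulr_suml divff // gt_eqF.
Qed.

End ResidualDraft.

Theorem theorem5 (R : realFieldType) (Sigma : finType) (Mb Ms : Sigma -> R)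
  (m : nat) (H : {set Sigma}) (pt : R) :
  is_distr Mb -> is_distr Ms -> (1 <= m)%N -> is_top_set Ms m.-1 H ->
  0 < \sum_(y | y \notin H) Ms y ->
  0 <= pt <= 1 ->
  [/\ is_allocation (univer pt Mb Ms H),
      locally_lossless pt Mb Ms H (univer pt Mb Ms H),
      (forall q : Sigma -> Sigma -> R, is_allocation q ->
         locally_lossless pt Mb Ms H q ->
         acc_rate Ms H q <= acc_rate Ms H (univer pt Mb Ms H)) &
      acc_rate Ms H (univer pt Mb Ms H) =
        \sum_(u in H) pt * Mb u
        + \sum_(u : Sigma) Num.min (pt * Mb u) (Mneg Ms H u)].
Proof.
move=> [Mb_ge0 sum_Mb] [Ms_ge0 _] _ _ mass_gt0 /andP[pt_ge0 pt_le1].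
pose a x := pt * Mb x; pose b := Mneg Ms H.
have a_ge0 x : 0 <= a x by rewrite mulr_ge0.
have sum_a : \sum_x a x = pt by rewrite -mulr_sumr sum_Mb mulr1.
have b_ge0 := Mneg_ge0 Ms_ge0 mass_gt0.
have sum_b : \sum_x b x = 1 := sum_Mneg mass_gt0.
have -> : univer pt Mb Ms H = residual_alloc pt a b by [].
have U_lossless := residual_alloc_lossless a_ge0 b_ge0 sum_a pt_le1 sum_b.
rewrite /acc_rate (sum_lossless_accept U_lossless) sum_diag_residual_alloc //.
split=> //; first exact: residual_alloc_is_allocation.
move=> q q_alloc q_lossless; rewrite (sum_lossless_accept q_lossless) lerD2l.
exact: sum_lossless_diag_le.
Qed.
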